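(* For every $n\ge 1$, $s(n)\le \lfloor \log_2 p_n\rfloor$.
   Context: $p_n$ denotes the $n$-th prime ($p_1=2$). For an integer $k\ge 3$, say that a positive integer $m$ is represented by $F_k$ if there exist integers $1\le x_1\le x_2\le\dots\le x_k$ with $x_1x_2\cdots x_k+x_1+\dots+x_k=m$. For $n\ge 1$, $s(n)$ is the smallest integer $k\ge 3$ such that $p_n+k-3$ is represented by $F_k$, and $s(n)=0$ if no such $k\ge 3$ exists. *)

From mathcomp Require Import all_boot.
From mathcomp Require Import boolp.
Set Implicit Arguments. Unset Strict Implicit. Unset Printing Implicit Defensive.

Lemma next_prime_ex (q : nat) : exists p, (q < p) && prime p.
Proof. by case: (prime_above q) => p h1 h2; exists p; rewrite h1 h2. Qed.

Definition next_prime (q : nat) : nat := ex_minn (next_prime_ex q).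

Fixpoint prime_seq (i : nat) : nat :=
  if i is i'.+1 then next_prime (prime_seq i') else 2.

(* p_n, the n-th prime with p_1 = 2 (meaningful for n >= 1) *)
Definition nth_prime (n : nat) : nat := prime_seq n.-1.

Definition represented (k m : nat) : Prop :=
  exists x : seq nat,
    [/\ size x = k, all (fun y => 0 < y) x, sorted leq x &
        \prod_(y <- x) y + \sum_(y <- x) y = m].

Definition s_good (n k : nat) : Prop :=
  3 <= k /\ represented k (nth_prime n + k - 3).

(* s(n): smallest k >= 3 with p_n + k - 3 represented by F_k, or 0 if none *)
Definition s (n : nat) : nat :=
  match pselect (exists k, asbool (s_good n k)) with
  | left h => ex_minn h
  | right _ => 0
  end.

From mathcomp Require Import all_boot.
From mathcomp Require Import boolp zify.

Set Implicit Arguments.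
Unset Strict Implicit.

(* Let k = s(n) >= 3 and take a minimal representation x_1 <= ... <= x_k of
   p_n + k - 3.  If x_1 >= 2 then p_n + k - 3 >= 2^k + 2k, so 2^k <= p_n.
   If x_1 = 1, dropping it represents p_n + (k-1) - 3 by F_(k-1), which
   contradicts minimality when k > 3; and when k = 3 the equation
   1 + b + c + bc = p_n factors as (b+1)(c+1) = p_n, impossible for a prime. *)

Lemma prime_seq_prime (i : nat) : prime (prime_seq i).
Proof. by case: i => [|i] //=; rewrite /next_prime; case: ex_minnP => p /andP[]. Qed.

Lemma nth_prime_prime (n : nat) : prime (nth_prime n).
Proof. exact: prime_seq_prime. Qed.

Lemma prod_ge_pow2 (x : seq nat) : all (leq 2) x -> 2 ^ size x <= \prod_(y <- x) y.
Proof.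
elim: x => [|a x IH] /=; first by rewrite big_nil.
by case/andP=> a_ge2 /IH x_ge; rewrite big_cons expnS leq_mul.
Qed.

Lemma sum_ge_double (x : seq nat) : all (leq 2) x -> 2 * size x <= \sum_(y <- x) y.
Proof.
elim: x => [|a x IH] /=; first by rewrite big_nil.
by case/andP=> a_ge2 /IH x_ge; rewrite big_cons mulnS leq_add.
Qed.

Lemma prod_add_sum_ge_pow2 (x : seq nat) (m : nat) : all (leq 2) x ->
  \prod_(y <- x) y + \sum_(y <- x) y = m -> 2 ^ size x + 2 * size x <= m.
Proof. by move=> x_ge2 <-; rewrite leq_add ?prod_ge_pow2 ?sum_ge_double. Qed.

Lemma represented_behead1 (x : seq nat) (m : nat) :
  all (fun y => 0 < y) x -> sorted leq (1 :: x) ->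
  \prod_(y <- 1 :: x) y + \sum_(y <- 1 :: x) y = m.+1 -> represented (size x) m.
Proof.
move=> x_pos /path_sorted x_sorted; rewrite !big_cons mul1n => eq_m.
by exists x; split => //; lia.
Qed.

Lemma prime_succ_mul_succ (b c : nat) : prime (b.+1 * c.+1) -> b = 0 \/ c = 0.
Proof.
case/primeP=> _ /(_ b.+1 (dvdn_mulr _ (dvdnn _))) /orP[/eqP [->]|/eqP]; first by left.
by rewrite -{1}[b.+1]muln1 => /eqP; rewrite eqn_pmul2l // => /eqP[]; right.
Qed.

Lemma minimal_representation_ge2 (n k : nat) :
  s_good n k -> (forall j, s_good n j -> k <= j) ->
  exists2 x : seq nat, size x = k /\ all (leq 2) x &
    \prod_(y <- x) y + \sum_(y <- x) y = nth_prime n + k - 3.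
Proof.
move=> [k_ge3 [[|a x] [size_x ax_pos sorted_ax eq_p]]] k_min.
  by rewrite -size_x in k_ge3.
have p_prime := nth_prime_prime n.
have [a_ge2|a_le1] := ltnP 1 a.
  exists (a :: x) => //; split=> //.
  by rewrite /= a_ge2 (sub_all _ (order_path_min leq_trans sorted_ax)) // => y /(leq_trans a_ge2).
have a1 : a = 1 by case/andP: ax_pos; lia.
subst a; case/andP: ax_pos => _ x_pos.
have [k_gt3|k_le3] := ltnP 3 k.
  have pred_k_good : s_good n k.-1.
    split; first by lia.
    have k_pred : k.-1 = size x by rewrite -size_x.
    rewrite k_pred; apply: represented_behead1 => //; rewrite eq_p -size_x /=.
    by have := prime_gt1 p_prime; lia.
  by have := k_min _ pred_k_good; lia.
have k3 : k = 3 by lia.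
move: size_x eq_p; rewrite k3.
case: x x_pos sorted_ax => [|b [|c []]] //= /and3P[b_pos c_pos _] _ _.
rewrite !big_cons !big_nil => eq_p.
have : prime (b.+1 * c.+1) by have -> : b.+1 * c.+1 = nth_prime n by lia.
by case/prime_succ_mul_succ; lia.
Qed.

Theorem proposition4 (n : nat) : 1 <= n -> s n <= trunc_log 2 (nth_prime n).
Proof.
move=> _; rewrite /s; case: pselect => [ex_k|_] //.
case: ex_minnP => k /asboolP k_good k_min.
have [x [size_x x_ge2] eq_p] := minimal_representation_ge2 k_good (fun j => k_min j \o @asboolT _).
have := prod_add_sum_ge_pow2 x_ge2 eq_p; rewrite size_x => bound.
by apply: trunc_log_max => //; lia.
Qed.
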